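(* For every constant $c_0>0$ there is $C_0>0$ such that for every $C\ge C_0$ the following holds for all sufficiently large $n$. Let $1/n\le\theta\le1$, $p=\lceil Cn\log^3 n\rceil$, and $T:=\dfrac{c_0\,p\sqrt{\theta/n}}{\log n}$. Let $X$ be the $n\times p$ random matrix with iid entries $x_{ij}=\chi_{ij}\xi_{ij}$, $\chi_{ij}$ iid indicators with $\mathbb{P}(\chi_{ij}=1)=\theta$ and $\xi_{ij}$ iid Rademacher, independent of the $\chi$'s. Let $\alpha=2^{l}\cdot\frac{2}{n}$ for an integer $l\ge0$ with $\alpha\le 1$. Then for all $v,w\in\mathbb{R}^n$ with $\|v\|_1\le1$, $\|w\|_1\le1$, $\|v-w\|_\infty\le2\alpha$ and $|\mu_v-\mu_w|\le T/6$, $$\mathbb{P}\Big(\big|\,\|X^Tv\|_1-\|X^Tw\|_1\,\big|\ge T\Big)\le\exp(-5\alpha^{-1}\log n).$$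
   Context: $\mu_v:=\mathbb{E}\|X^Tv\|_1$. Rademacher variables take values $\pm1$ with probability $1/2$ each. *)

From Stdlib Require Import Reals List.
Import ListNotations.
Open Scope R_scope.

Fixpoint Rsum (k : nat) (f : nat -> R) : R :=
  match k with
  | O => 0
  | S k' => Rsum k' f + f k'
  end.

(* A sample of the randomness: a list of n*p pairs (chi_ij, xi_ij),
   entry (i,j) stored at position i*p+j; chi = true means chi_ij = 1,
   xi = true means xi_ij = +1, xi = false means xi_ij = -1. *)
Definition sample := list (bool * bool).

Fixpoint samples (k : nat) : list sample :=
  match k with
  | O => [nil]
  | S k' => flat_map (fun s => map (fun e => e :: s)
                 [(true,true); (true,false); (false,true); (false,false)])
              (samples k')
  end.

Definition weight (theta : R) (s : sample) : R :=
  fold_right (fun (e : bool * bool) (acc : R) => ((if fst e then theta else 1 - theta) * / 2) * acc) 1 s.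

Definition entry (p : nat) (s : sample) (i j : nat) : R :=
  let e := nth (i * p + j) s (false, false) in
  (if fst e then 1 else 0) * (if snd e then 1 else -1).

Definition normXTv (n p : nat) (s : sample) (v : nat -> R) : R :=
  Rsum p (fun j => Rabs (Rsum n (fun i => entry p s i j * v i))).

Definition Expect (n p : nat) (theta : R) (f : sample -> R) : R :=
  fold_right (fun s acc => weight theta s * f s + acc) 0 (samples (n * p)).

Definition mu (n p : nat) (theta : R) (v : nat -> R) : R :=
  Expect n p theta (fun s => normXTv n p s v).

Definition ProbGe (n p : nat) (theta : R) (f : sample -> R) (t : R) : R :=
  Expect n p theta (fun s => if Rle_dec t (f s) then 1 else 0).

Definition l1norm (n : nat) (v : nat -> R) : R := Rsum n (fun i => Rabs (v i)).

From Stdlib Require Import Reals Lra Lia Psatz List ZArith.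
Open Scope R_scope.

(* ||X^T v||_1 - ||X^T w||_1 is the sum over the independent columns X_j of
   Y_j = |<X_j, v>| - |<X_j, w>|, and |Y_j| <= |<X_j, v - w>|.  Every coordinate
   of v - w is at most 2 alpha and ||v - w||_2^2 <= 4 alpha, so the moment
   generating function of <X_j, v - w> at mu is at most exp (56 theta mu^2 alpha)
   while |mu| alpha <= 1/2; via cosh estimates this bounds the moment generating
   function of the centred Y_j.  A Chernoff bound with the optimal lambda gives the
   tail exp (- t^2 / (4 K p theta alpha)), K = 1347 * 224, at t = 5T/6, the remaining
   T/6 absorbing mu_v - mu_w, and p >= C n log^3 n makes this at most
   exp (- 6 log n / alpha). *)

(* [Expect n p th] is [Ex th (n * p)]; the number of cells is generalised for induction. *)
Definition Ex (th : R) (k : nat) (f : sample -> R) : R :=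
  fold_right (fun s acc => weight th s * f s + acc) 0 (samples k).

Definition Ex1 (th : R) (g : bool * bool -> R) : R :=
  th / 2 * g (true, true) + th / 2 * g (true, false)
  + (1 - th) / 2 * g (false, true) + (1 - th) / 2 * g (false, false).

Lemma Ex1_ext th f g : (forall e, f e = g e) -> Ex1 th f = Ex1 th g.
Proof. intro Hfg; unfold Ex1; rewrite !Hfg; reflexivity. Qed.

Lemma Ex1_scal th c g : Ex1 th (fun e => c * g e) = c * Ex1 th g.
Proof. unfold Ex1; ring. Qed.

Lemma Ex1_const th c : Ex1 th (fun _ => c) = c.
Proof. unfold Ex1; field. Qed.

Lemma Ex1_le th f g : 0 <= th <= 1 -> (forall e, f e <= g e) -> Ex1 th f <= Ex1 th g.
Proof.
  intros Hth Hfg; unfold Ex1.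
  pose proof (Hfg (true, true)); pose proof (Hfg (true, false)).
  pose proof (Hfg (false, true)); pose proof (Hfg (false, false)).
  nra.
Qed.

Lemma Ex_0 th f : Ex th 0 f = f nil.
Proof. unfold Ex; simpl; ring. Qed.

Lemma Ex_S th k f : Ex th (S k) f = Ex th k (fun s => Ex1 th (fun e => f (e :: s))).
Proof.
  unfold Ex; simpl samples.
  induction (samples k) as [|s ss IH]; simpl; [reflexivity|].
  rewrite IH; unfold Ex1; field.
Qed.

Lemma Ex_ext th k f g : (forall s, f s = g s) -> Ex th k f = Ex th k g.
Proof.
  intro Hfg; unfold Ex.
  induction (samples k); simpl; [reflexivity|]; rewrite Hfg, IHl; reflexivity.
Qed.

Lemma Ex_lin th k a b f g :
  Ex th k (fun s => a * f s + b * g s) = a * Ex th k f + b * Ex th k g.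
Proof. unfold Ex; induction (samples k); simpl; [ring|]; rewrite IHl; ring. Qed.

Lemma Ex_plus th k f g : Ex th k (fun s => f s + g s) = Ex th k f + Ex th k g.
Proof.
  rewrite <- (Rmult_1_l (Ex th k f)), <- (Rmult_1_l (Ex th k g)), <- Ex_lin.
  apply Ex_ext; intro; ring.
Qed.

Lemma Ex_scal th k a f : Ex th k (fun s => a * f s) = a * Ex th k f.
Proof.
  rewrite <- (Rplus_0_r (a * _)), <- (Rmult_0_l (Ex th k f)), <- Ex_lin.
  apply Ex_ext; intro; ring.
Qed.

Lemma Ex_minus th k f g : Ex th k (fun s => f s - g s) = Ex th k f - Ex th k g.
Proof.
  replace (Ex th k f - Ex th k g) with (1 * Ex th k f + (-1) * Ex th k g) by ring.
  rewrite <- Ex_lin; apply Ex_ext; intro; ring.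
Qed.

Lemma Ex_const th k c : Ex th k (fun _ => c) = c.
Proof.
  induction k as [|k IH]; [apply Ex_0|].
  rewrite Ex_S, (Ex_ext _ _ _ (fun _ => c)); [exact IH | intro; apply Ex1_const].
Qed.

Section Monotonicity.

Variable th : R.
Hypothesis th_range : 0 <= th <= 1.

Lemma Ex_le k f g : (forall s, f s <= g s) -> Ex th k f <= Ex th k g.
Proof.
  revert f g; induction k as [|k IH]; intros f g Hfg.
  - rewrite !Ex_0; apply Hfg.
  - rewrite !Ex_S; apply IH; intro s; apply Ex1_le; auto.
Qed.

Lemma Ex_nonneg k f : (forall s, 0 <= f s) -> 0 <= Ex th k f.
Proof. intro Hf; rewrite <- (Ex_const th k 0); apply Ex_le, Hf. Qed.

Lemma Rabs_Ex_le k f : Rabs (Ex th k f) <= Ex th k (fun s => Rabs (f s)).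
Proof.
  apply Rabs_le; split.
  - replace (- Ex th k (fun s => Rabs (f s))) with (Ex th k (fun s => -1 * Rabs (f s)))
      by (rewrite Ex_scal; ring).
    apply Ex_le; intro s; pose proof (Rle_abs (- f s)); rewrite Rabs_Ropp in *; lra.
  - apply Ex_le; intro s; apply Rle_abs.
Qed.

End Monotonicity.

Definition depends_only_on (A : nat -> bool) (g : sample -> R) : Prop :=
  forall s t, (forall i, A i = true -> nth i s (false, false) = nth i t (false, false)) ->
  g s = g t.

Lemma depends_only_on_mono A B g :
  (forall i, A i = true -> B i = true) -> depends_only_on A g -> depends_only_on B g.
Proof. intros HAB Hg s t Hst; apply Hg; intros i Hi; apply Hst, HAB, Hi. Qed.

Lemma depends_only_on_tail A g e :
  depends_only_on A g -> depends_only_on (fun i => A (S i)) (fun s => g (e :: s)).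
Proof. intros Hg s t Hst; apply Hg; intros [|i] Hi; simpl; auto. Qed.

Lemma depends_only_on_Ex1_head th A g :
  depends_only_on A g ->
  depends_only_on (fun i => A (S i)) (fun s => Ex1 th (fun e => g (e :: s))).
Proof.
  intros Hg s t Hst; unfold Ex1.
  rewrite !(depends_only_on_tail _ _ _ Hg s t Hst); reflexivity.
Qed.

Lemma depends_only_on_head A g e s :
  A 0%nat = false -> depends_only_on A g -> g (e :: s) = g ((false, false) :: s).
Proof. intros HA0 Hg; apply Hg; intros [|i] Hi; simpl; [congruence | reflexivity]. Qed.

Lemma Ex_mul_indep th k : forall A g h,
  depends_only_on A g -> depends_only_on (fun i => negb (A i)) h ->
  Ex th k (fun s => h s * g s) = Ex th k h * Ex th k g.
Proof.
  induction k as [|k IH]; intros A g h Hg Hh; [rewrite !Ex_0; reflexivity|].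
  assert (Hhead_free : forall A g h, depends_only_on A g ->
            depends_only_on (fun i => negb (A i)) h -> A 0%nat = false ->
            Ex th (S k) (fun s => h s * g s) = Ex th (S k) h * Ex th (S k) g).
  { clear A g h Hg Hh; intros A g h Hg Hh HA0; rewrite !Ex_S.
    assert (Hg0 : forall e s, g (e :: s) = g ((false, false) :: s))
      by (intros; exact (depends_only_on_head _ _ _ _ HA0 Hg)).
    transitivity (Ex th k (fun s => Ex1 th (fun e => h (e :: s)) * g ((false, false) :: s))).
    { apply Ex_ext; intro s.
      rewrite (Ex1_ext th _ (fun e => g ((false, false) :: s) * h (e :: s)))
        by (intro; rewrite Hg0; ring).
      rewrite Ex1_scal; ring. }
    rewrite (IH (fun i => A (S i))).
    - f_equal; apply Ex_ext; intro s.
      rewrite (Ex1_ext th _ (fun _ => g ((false, false) :: s))) by (intro; apply Hg0).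
      symmetry; apply Ex1_const.
    - exact (depends_only_on_tail _ _ _ Hg).
    - exact (depends_only_on_Ex1_head th _ _ Hh). }
  destruct (A 0%nat) eqn:HA0; [|now apply (Hhead_free A)].
  rewrite Rmult_comm, (Ex_ext _ _ _ (fun s => g s * h s)) by (intro; ring).
  apply (Hhead_free (fun i => negb (A i))); [exact Hh| |now rewrite HA0].
  apply (depends_only_on_mono A); [intros i Hi; now rewrite Hi | exact Hg].
Qed.

Fixpoint Rprod (k : nat) (f : nat -> R) : R :=
  match k with
  | O => 1
  | S k' => Rprod k' f * f k'
  end.

Lemma Rsum_ext k f g : (forall i, (i < k)%nat -> f i = g i) -> Rsum k f = Rsum k g.
Proof. induction k; intro H; simpl; [reflexivity|]; rewrite IHk, H; auto. Qed.

Lemma Rprod_ext k f g : (forall i, (i < k)%nat -> f i = g i) -> Rprod k f = Rprod k g.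
Proof. induction k; intro H; simpl; [reflexivity|]; rewrite IHk, H; auto. Qed.

Lemma Rsum_plus k f g : Rsum k (fun i => f i + g i) = Rsum k f + Rsum k g.
Proof. induction k; simpl; [ring|]; rewrite IHk; ring. Qed.

Lemma Rsum_minus k f g : Rsum k (fun i => f i - g i) = Rsum k f - Rsum k g.
Proof. induction k; simpl; [ring|]; rewrite IHk; ring. Qed.

Lemma Rsum_scal k a f : Rsum k (fun i => a * f i) = a * Rsum k f.
Proof. induction k; simpl; [ring|]; rewrite IHk; ring. Qed.

Lemma Rsum_le k f g : (forall i, (i < k)%nat -> f i <= g i) -> Rsum k f <= Rsum k g.
Proof. induction k; intro H; simpl; [lra|]; apply Rplus_le_compat; auto. Qed.

Lemma Rprod_nonneg k f : (forall i, (i < k)%nat -> 0 <= f i) -> 0 <= Rprod k f.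
Proof. induction k; intro H; simpl; [lra|]; apply Rmult_le_pos; auto. Qed.

Lemma Rprod_le k f g : (forall i, (i < k)%nat -> 0 <= f i <= g i) -> Rprod k f <= Rprod k g.
Proof.
  induction k; intro H; simpl; [lra|].
  apply Rmult_le_compat; try apply H; auto.
  apply Rprod_nonneg; intros i Hi; apply H; auto.
Qed.

Lemma exp_Rsum k f : exp (Rsum k f) = Rprod k (fun i => exp (f i)).
Proof. induction k; simpl; [apply exp_0|]; rewrite exp_plus, IHk; reflexivity. Qed.

Lemma Rprod_exp_const k c : Rprod k (fun _ => exp c) = exp (INR k * c).
Proof.
  induction k; simpl Rprod; [rewrite Rmult_0_l, exp_0; reflexivity|].
  rewrite IHk, <- exp_plus, S_INR; f_equal; ring.
Qed.

Lemma Ex_Rsum th k q F :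
  Ex th k (fun s => Rsum q (fun i => F i s)) = Rsum q (fun i => Ex th k (F i)).
Proof. induction q; simpl; [apply Ex_const|]; rewrite Ex_plus, IHq; reflexivity. Qed.

Lemma depends_only_on_Rprod A q F :
  (forall i, (i < q)%nat -> depends_only_on A (F i)) ->
  depends_only_on A (fun s => Rprod q (fun i => F i s)).
Proof.
  intros HF s t Hst; apply Rprod_ext; intros i Hi; exact (HF i Hi s t Hst).
Qed.

Lemma Ex_Rprod_indep th k q F (A : nat -> nat -> bool) :
  (forall i, (i < q)%nat -> depends_only_on (A i) (F i)) ->
  (forall i i' m, (i < i' < q)%nat -> A i m = true -> A i' m = false) ->
  Ex th k (fun s => Rprod q (fun i => F i s)) = Rprod q (fun i => Ex th k (F i)).
Proof.
  induction q as [|q IH]; intros HF Hdisj; simpl; [apply Ex_const|].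
  rewrite (Ex_mul_indep th k (A q)), IH.
  - reflexivity.
  - intros i Hi; apply HF; lia.
  - intros i i' m Hii'; apply Hdisj; lia.
  - apply HF; lia.
  - apply depends_only_on_Rprod; intros i Hi.
    apply (depends_only_on_mono (A i)); [|apply HF; lia].
    intros m Hm; rewrite (Hdisj i q m); auto.
Qed.

Lemma Ex_nth th k pos G : (pos < k)%nat ->
  Ex th k (fun s => G (nth pos s (false, false))) = Ex1 th G.
Proof.
  revert pos; induction k as [|k IH]; intros pos Hpos; [lia|].
  rewrite Ex_S; destruct pos as [|pos]; simpl.
  - apply Ex_const.
  - rewrite <- (IH pos) by lia; apply Ex_ext; intro; apply Ex1_const.
Qed.

Lemma exp_le_exp x y : x <= y -> exp x <= exp y.
Proof. intro H; destruct (Req_dec x y) as [->|]; [lra|]; left; apply exp_increasing; lra. Qed.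

Lemma exp_mul_exp_opp x : exp x * exp (- x) = 1.
Proof. rewrite <- exp_plus, Rplus_opp_r; apply exp_0. Qed.

Lemma exp_sub1_le_3x x : 0 <= x <= 1 -> exp x - 1 <= 3 * x.
Proof.
  intro Hx.
  assert (Hconv : exp x - 1 <= x * exp x).
  { pose proof (exp_ineq1_le (- x)); pose proof (exp_mul_exp_opp x); pose proof (exp_pos x); nra. }
  pose proof (exp_le_exp x 1 (proj2 Hx)); pose proof exp_le_3; nra.
Qed.

Lemma cosh_opp u : cosh (- u) = cosh u.
Proof. unfold cosh; rewrite Ropp_involutive; field. Qed.

Lemma cosh_Rabs u : cosh (Rabs u) = cosh u.
Proof. unfold Rabs; destruct (Rcase_abs u); [apply cosh_opp | reflexivity]. Qed.

Lemma cosh_ge_1 u : 1 <= cosh u.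
Proof. unfold cosh; pose proof (exp_ineq1_le u); pose proof (exp_ineq1_le (- u)); lra. Qed.

Lemma cosh_le_nonneg a b : 0 <= a <= b -> cosh a <= cosh b.
Proof.
  intro Hab; unfold cosh.
  (* e^b - e^a >= e^-a - e^-b because e^-a e^-b <= 1 *)
  pose proof (exp_le_exp a b (proj2 Hab)); pose proof (exp_le_exp (- b) (- a) ltac:(lra)).
  pose proof (exp_mul_exp_opp a); pose proof (exp_mul_exp_opp b).
  pose proof (exp_pos (- a)); pose proof (exp_pos (- b)).
  assert (exp (- a) * exp (- b) <= 1).
  { rewrite <- exp_plus, <- exp_0; apply exp_le_exp; lra. }
  assert (exp (- a) - exp (- b) = (exp b - exp a) * exp (- a) * exp (- b)) by nra.
  nra.
Qed.

Lemma cosh_le_Rabs u v : Rabs u <= Rabs v -> cosh u <= cosh v.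
Proof.
  intro H; rewrite <- cosh_Rabs, <- (cosh_Rabs v).
  apply cosh_le_nonneg; split; [apply Rabs_pos | exact H].
Qed.

Lemma exp_le_cosh u : exp u <= 1 + u + 2 * (cosh u - 1).
Proof. unfold cosh; pose proof (exp_ineq1_le (- u)); lra. Qed.

Lemma cosh_sub1_le_sqr u : -1 <= u <= 1 -> cosh u - 1 <= 14 * u ^ 2.
Proof.
  intro Hu.
  assert (Hsq : cosh u - 1 = (exp u - 1) ^ 2 * exp (- u) / 2).
  { replace ((exp u - 1) ^ 2 * exp (- u))
      with (exp u * (exp u * exp (- u)) - 2 * (exp u * exp (- u)) + exp (- u)) by ring.
    rewrite exp_mul_exp_opp; unfold cosh; field. }
  assert (Hexpm1 : (exp u - 1) ^ 2 <= 9 * u ^ 2).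
  { pose proof (exp_ineq1_le u); destruct (Rle_lt_dec 0 u).
    - pose proof (exp_sub1_le_3x u ltac:(lra)); nra.
    - pose proof (exp_le_exp u 0 ltac:(lra)); rewrite exp_0 in *; nra. }
  assert (exp (- u) <= 3) by (pose proof (exp_le_exp (- u) 1 ltac:(lra)); pose proof exp_le_3; lra).
  pose proof (exp_pos (- u)); pose proof (pow2_ge_0 (exp u - 1)); pose proof (pow2_ge_0 u).
  rewrite Hsq; nra.
Qed.

Lemma sqr_le_cosh_sub1 u : u ^ 2 <= 8 * (cosh u - 1).
Proof.
  assert (Hhalf : forall x, exp x = exp (x / 2) * exp (x / 2))
    by (intro; rewrite <- exp_plus; f_equal; field).
  unfold cosh; destruct (Rle_lt_dec 0 u).
  - pose proof (exp_ineq1_le (u / 2)); pose proof (exp_ineq1_le (- u)); rewrite (Hhalf u); nra.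
  - pose proof (exp_ineq1_le (- u / 2)); pose proof (exp_ineq1_le u); rewrite (Hhalf (- u)); nra.
Qed.

Lemma cosh_add_le a b : cosh (a + b) <= (cosh (2 * a) + cosh (2 * b)) / 2.
Proof.
  unfold cosh.
  replace (- (a + b)) with (- a + - b) by ring.
  replace (2 * a) with (a + a) by ring; replace (2 * b) with (b + b) by ring.
  replace (- (a + a)) with (- a + - a) by ring; replace (- (b + b)) with (- b + - b) by ring.
  rewrite !exp_plus.
  pose proof (pow2_ge_0 (exp a - exp b)); pose proof (pow2_ge_0 (exp (- a) - exp (- b))); lra.
Qed.

Section CenteredMgf.

Variable th : R.
Hypothesis th_range : 0 <= th <= 1.
Variable k : nat.

Lemma sqr_Ex_Rabs_le V :
  Ex th k (fun s => Rabs (V s)) ^ 2 <= 8 * (Ex th k (fun s => cosh (V s)) - 1).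
Proof.
  set (beta := Ex th k (fun s => Rabs (V s))).
  (* beta |V| <= beta^2 / 2 + V^2 / 2 replaces Jensen's inequality for the square. *)
  assert (Hpt : Ex th k (fun s => beta * Rabs (V s))
                <= Ex th k (fun s => (beta ^ 2 / 2 - 4) + 4 * cosh (V s))).
  { apply Ex_le; auto; intro s.
    pose proof (sqr_le_cosh_sub1 (V s)) as Hc; pose proof (pow2_ge_0 (beta - Rabs (V s))).
    rewrite <- (Rsqr_pow2 (V s)), Rsqr_abs, Rsqr_pow2 in Hc; nra. }
  rewrite Ex_scal, Ex_plus, Ex_const, Ex_scal in Hpt; fold beta in Hpt; nra.
Qed.

Lemma Ex_exp_centered_le U V r :
  0 <= r <= / 96 -> (forall s, Rabs (U s) <= Rabs (V s)) ->
  Ex th k (fun s => cosh (V s)) <= exp r -> Ex th k (fun s => cosh (2 * V s)) <= exp r ->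
  Ex th k (fun s => exp (U s - Ex th k U)) <= exp (1347 * r).
Proof.
  intros Hr HUV Hcosh1 Hcosh2.
  set (m := Ex th k U); set (beta := Ex th k (fun s => Rabs (V s))).
  assert (Hexp : exp r - 1 <= 3 * r) by (apply exp_sub1_le_3x; lra).
  assert (Hbeta0 : 0 <= beta) by (apply Ex_nonneg; auto; intro; apply Rabs_pos).
  assert (Hbeta2 : beta ^ 2 <= 24 * r)
    by (pose proof (sqr_Ex_Rabs_le V) as Hsq; fold beta in Hsq; lra).
  assert (Hbeta1 : 2 * beta <= 1) by nra.
  assert (Hm : Rabs m <= beta) by (eapply Rle_trans; [apply Rabs_Ex_le | apply Ex_le]; auto).
  assert (Hpt : forall s, exp (U s - m) <= (cosh (2 * beta) - 1 - m) + U s + cosh (2 * V s)).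
  { intro s.
    assert (Hc : cosh (U s - m) <= cosh (Rabs (V s) + beta)).
    { apply cosh_le_Rabs.
      rewrite (Rabs_pos_eq (Rabs (V s) + beta)) by (pose proof (Rabs_pos (V s)); lra).
      unfold Rminus; eapply Rle_trans; [apply Rabs_triang|].
      rewrite Rabs_Ropp; specialize (HUV s); lra. }
    pose proof (cosh_add_le (Rabs (V s)) beta) as Hadd.
    replace (2 * Rabs (V s)) with (Rabs (2 * V s)) in Hadd
      by (rewrite Rabs_mult, (Rabs_pos_eq 2); lra).
    rewrite cosh_Rabs in Hadd.
    pose proof (exp_le_cosh (U s - m)); lra. }
  eapply Rle_trans; [apply Ex_le; auto; exact Hpt|].
  rewrite !Ex_plus, Ex_const; fold m.
  (* 1347 = 3 + 14 * 4 * 24 *)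
  pose proof (cosh_sub1_le_sqr (2 * beta) ltac:(lra)); pose proof (exp_ineq1_le (1347 * r)); nra.
Qed.

End CenteredMgf.

Definition ent (e : bool * bool) : R := (if fst e then 1 else 0) * (if snd e then 1 else -1).

Definition col_dot (n p j : nat) (d : nat -> R) (s : sample) : R :=
  Rsum n (fun i => entry p s i j * d i).

Lemma col_dot_sub n p j v w s :
  col_dot n p j v s - col_dot n p j w s = col_dot n p j (fun i => v i - w i) s.
Proof. unfold col_dot; rewrite <- Rsum_minus; apply Rsum_ext; intros; ring. Qed.

Lemma depends_only_on_col_dot n p j d : (j < p)%nat ->
  depends_only_on (fun m => Nat.eqb (m mod p) j) (col_dot n p j d).
Proof.
  intros Hj s t Hst; apply Rsum_ext; intros i _; unfold entry.
  rewrite (Hst (i * p + j)%nat); [reflexivity|].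
  apply Nat.eqb_eq; rewrite Nat.add_comm, Nat.Div0.mod_add; apply Nat.mod_small, Hj.
Qed.

Lemma Ex1_exp_ent th mu c : Ex1 th (fun e => exp (mu * (ent e * c))) = 1 - th + th * cosh (mu * c).
Proof.
  unfold Ex1, ent, cosh; simpl.
  replace (mu * (1 * 1 * c)) with (mu * c) by ring.
  replace (mu * (1 * -1 * c)) with (- (mu * c)) by ring.
  replace (mu * (0 * 1 * c)) with 0 by ring; replace (mu * (0 * -1 * c)) with 0 by ring.
  rewrite exp_0; field.
Qed.

Lemma Ex_exp_col_dot th n p j d mu : (j < p)%nat ->
  Ex th (n * p) (fun s => exp (mu * col_dot n p j d s))
  = Rprod n (fun i => 1 - th + th * cosh (mu * d i)).
Proof.
  intro Hj.
  set (F := fun i s => exp (mu * (ent (nth (i * p + j) s (false, false)) * d i))).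
  transitivity (Ex th (n * p) (fun s => Rprod n (fun i => F i s))).
  { apply Ex_ext; intro s; unfold col_dot; rewrite <- Rsum_scal, exp_Rsum; reflexivity. }
  rewrite (Ex_Rprod_indep th (n * p) n F (fun i m => Nat.eqb m (i * p + j))).
  - apply Rprod_ext; intros i Hi; unfold F; cbv beta.
    rewrite <- Ex1_exp_ent.
    apply (Ex_nth th (n * p) (i * p + j) (fun e => exp (mu * (ent e * d i)))); nia.
  - intros i _ s t Hst; unfold F; rewrite (Hst (i * p + j)%nat (Nat.eqb_refl _)); reflexivity.
  - intros i i' m Hii' Hm; apply Nat.eqb_eq in Hm; apply Nat.eqb_neq; nia.
Qed.

Lemma Ex_exp_col_dot_le th n p j d mu : 0 <= th <= 1 -> (j < p)%nat ->
  (forall i, (i < n)%nat -> Rabs (mu * d i) <= 1) ->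
  Ex th (n * p) (fun s => exp (mu * col_dot n p j d s))
  <= exp (14 * th * mu ^ 2 * Rsum n (fun i => d i ^ 2)).
Proof.
  intros Hth Hj Hd.
  rewrite Ex_exp_col_dot, <- Rsum_scal, exp_Rsum by exact Hj.
  apply Rprod_le; intros i Hi.
  pose proof (cosh_ge_1 (mu * d i)).
  assert (Hx : -1 <= mu * d i <= 1) by (specialize (Hd i Hi); unfold Rabs in Hd;
    destruct (Rcase_abs (mu * d i)); lra).
  pose proof (cosh_sub1_le_sqr _ Hx).
  pose proof (exp_ineq1_le (14 * th * mu ^ 2 * d i ^ 2)).
  split; nra.
Qed.

Lemma Ex_cosh_col_dot_le th n p j d mu : 0 <= th <= 1 -> (j < p)%nat ->
  (forall i, (i < n)%nat -> Rabs (mu * d i) <= 1) ->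
  Ex th (n * p) (fun s => cosh (mu * col_dot n p j d s))
  <= exp (14 * th * mu ^ 2 * Rsum n (fun i => d i ^ 2)).
Proof.
  intros Hth Hj Hd.
  assert (Hd' : forall i, (i < n)%nat -> Rabs (- mu * d i) <= 1)
    by (intros i Hi; rewrite Ropp_mult_distr_l_reverse, Rabs_Ropp; auto).
  pose proof (Ex_exp_col_dot_le th n p j d mu Hth Hj Hd).
  pose proof (Ex_exp_col_dot_le th n p j d (- mu) Hth Hj Hd').
  replace ((- mu) ^ 2) with (mu ^ 2) in * by ring.
  rewrite (Ex_ext _ _ _ (fun s => / 2 * exp (mu * col_dot n p j d s)
                                 + / 2 * exp (- mu * col_dot n p j d s))).
  - rewrite Ex_lin; lra.
  - intro s; unfold cosh; rewrite Ropp_mult_distr_l; field.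
Qed.

Lemma Rsum_sqr_sub_le n v w a : 0 <= a -> l1norm n v <= 1 -> l1norm n w <= 1 ->
  (forall i, (i < n)%nat -> Rabs (v i - w i) <= 2 * a) ->
  Rsum n (fun i => (v i - w i) ^ 2) <= 4 * a.
Proof.
  intros Ha Hv Hw Hvw; unfold l1norm in *.
  apply Rle_trans with (2 * a * (Rsum n (fun i => Rabs (v i)) + Rsum n (fun i => Rabs (w i))));
    [|nra].
  rewrite <- Rsum_plus, <- Rsum_scal; apply Rsum_le; intros i Hi.
  specialize (Hvw i Hi).
  assert (Rabs (v i - w i) <= Rabs (v i) + Rabs (w i)) by
    (unfold Rminus; rewrite <- (Rabs_Ropp (w i)); apply Rabs_triang).
  rewrite <- Rsqr_pow2, Rsqr_abs; unfold Rsqr; pose proof (Rabs_pos (v i - w i)); nra.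
Qed.

Definition col_gap (n p j : nat) (v w : nat -> R) (s : sample) : R :=
  Rabs (col_dot n p j v s) - Rabs (col_dot n p j w s).

Lemma Ex_exp_col_gap_le th n p j v w a lam :
  0 <= th <= 1 -> (j < p)%nat -> 0 <= a ->
  l1norm n v <= 1 -> l1norm n w <= 1 ->
  (forall i, (i < n)%nat -> Rabs (v i - w i) <= 2 * a) ->
  0 <= lam -> 4 * a * lam <= 1 -> 224 * th * lam ^ 2 * a <= / 96 ->
  Ex th (n * p) (fun s => exp (lam * (col_gap n p j v w s - Ex th (n * p) (col_gap n p j v w))))
  <= exp (1347 * (224 * th * lam ^ 2 * a)).
Proof.
  intros Hth Hj Ha Hv Hw Hvw Hlam Hlam1 Hlam2.
  set (d := fun i => v i - w i).
  assert (Hd2 : Rsum n (fun i => d i ^ 2) <= 4 * a) by (apply Rsum_sqr_sub_le; auto).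
  assert (Hcosh : forall mu, 0 <= mu <= 2 * lam ->
            Ex th (n * p) (fun s => cosh (mu * col_dot n p j d s)) <= exp (56 * th * mu ^ 2 * a)).
  { intros mu Hmu; eapply Rle_trans; [apply Ex_cosh_col_dot_le; auto|].
    - intros i Hi; specialize (Hvw i Hi); fold (d i) in Hvw.
      rewrite Rabs_mult, (Rabs_pos_eq mu) by lra; pose proof (Rabs_pos (d i)); nra.
    - apply exp_le_exp.
      assert (0 <= th * mu ^ 2) by (apply Rmult_le_pos; [lra | apply pow2_ge_0]); nra. }
  transitivity (Ex th (n * p) (fun s => exp (lam * col_gap n p j v w s
                                           - Ex th (n * p) (fun s => lam * col_gap n p j v w s)))).
  { right; apply Ex_ext; intro s; rewrite Ex_scal; f_equal; ring. }
  apply Ex_exp_centered_le with (V := fun s => lam * col_dot n p j d s); auto.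
  - pose proof (pow2_ge_0 lam); split; [|exact Hlam2].
    apply Rmult_le_pos; [apply Rmult_le_pos|]; nra.
  - intro s; unfold col_gap; rewrite !Rabs_mult, (Rabs_pos_eq lam) by exact Hlam.
    unfold d; rewrite <- col_dot_sub.
    apply Rmult_le_compat_l; [exact Hlam | apply Rabs_triang_inv2].
  - eapply Rle_trans; [apply Hcosh; lra|]; apply exp_le_exp.
    assert (0 <= th * lam ^ 2 * a)
      by (apply Rmult_le_pos; [apply Rmult_le_pos; [lra | apply pow2_ge_0] | exact Ha]).
    lra.
  - rewrite (Ex_ext _ _ _ (fun s => cosh (2 * lam * col_dot n p j d s)))
      by (intro; f_equal; ring).
    eapply Rle_trans; [apply Hcosh; lra|]; right; f_equal; ring.
Qed.

Lemma Ex_indicator_le_exp th k X t lam : 0 <= th <= 1 -> 0 <= lam ->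
  Ex th k (fun s => if Rle_dec t (X s) then 1 else 0)
  <= exp (- (lam * t)) * Ex th k (fun s => exp (lam * X s)).
Proof.
  intros Hth Hlam; rewrite <- Ex_scal; apply Ex_le; auto; intro s.
  rewrite <- exp_plus; destruct (Rle_dec t (X s)).
  - rewrite <- exp_0; apply exp_le_exp; nra.
  - left; apply exp_pos.
Qed.

Lemma normXTv_sub n p s v w :
  normXTv n p s v - normXTv n p s w = Rsum p (fun j => col_gap n p j v w s).
Proof. unfold normXTv; rewrite <- Rsum_minus; reflexivity. Qed.

Lemma normXTv_sub_upper_tail th n p v w a lam t :
  0 <= th <= 1 -> 0 <= a -> l1norm n v <= 1 -> l1norm n w <= 1 ->
  (forall i, (i < n)%nat -> Rabs (v i - w i) <= 2 * a) ->
  0 <= lam -> 4 * a * lam <= 1 -> 224 * th * lam ^ 2 * a <= / 96 ->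
  let D := fun s => normXTv n p s v - normXTv n p s w in
  Ex th (n * p) (fun s => if Rle_dec t (D s - Ex th (n * p) D) then 1 else 0)
  <= exp (- (lam * t) + INR p * (1347 * (224 * th * lam ^ 2 * a))).
Proof.
  intros Hth Ha Hv Hw Hvw Hlam Hlam1 Hlam2 D.
  set (G := fun j s => exp (lam * (col_gap n p j v w s - Ex th (n * p) (col_gap n p j v w)))).
  eapply Rle_trans; [apply Ex_indicator_le_exp; eauto|].
  rewrite exp_plus; apply Rmult_le_compat_l; [left; apply exp_pos|].
  transitivity (Ex th (n * p) (fun s => Rprod p (fun j => G j s))).
  { right; apply Ex_ext; intro s; unfold D, G.
    rewrite <- exp_Rsum, Rsum_scal, Rsum_minus, normXTv_sub.
    rewrite (Ex_ext _ _ _ (fun s => Rsum p (fun j => col_gap n p j v w s)))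
      by (intro; apply normXTv_sub).
    rewrite Ex_Rsum; reflexivity. }
  rewrite (Ex_Rprod_indep th (n * p) p G (fun j m => Nat.eqb (m mod p) j)).
  - rewrite <- Rprod_exp_const; apply Rprod_le; intros j Hj; split.
    + apply Ex_nonneg; auto; intro; left; apply exp_pos.
    + apply Ex_exp_col_gap_le; auto.
  - intros j Hj s1 s2 Hs; unfold G, col_gap.
    rewrite (depends_only_on_col_dot n p j v Hj s1 s2 Hs),
            (depends_only_on_col_dot n p j w Hj s1 s2 Hs); reflexivity.
  - intros j j' m Hjj' Hm; apply Nat.eqb_eq in Hm; apply Nat.eqb_neq; lia.
Qed.

Lemma normXTv_deviation_tail th n p v w a lam t T :
  0 <= th <= 1 -> 0 <= a -> l1norm n v <= 1 -> l1norm n w <= 1 ->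
  (forall i, (i < n)%nat -> Rabs (v i - w i) <= 2 * a) ->
  0 <= lam -> 4 * a * lam <= 1 -> 224 * th * lam ^ 2 * a <= / 96 ->
  Rabs (mu n p th v - mu n p th w) + t <= T ->
  ProbGe n p th (fun s => Rabs (normXTv n p s v - normXTv n p s w)) T
  <= 2 * exp (- (lam * t) + INR p * (1347 * (224 * th * lam ^ 2 * a))).
Proof.
  intros Hth Ha Hv Hw Hvw Hlam Hlam1 Hlam2 HT.
  pose proof (normXTv_sub_upper_tail th n p v w a lam t Hth Ha Hv Hw Hvw Hlam Hlam1 Hlam2)
    as Hvw_tail.
  assert (Hwv : forall i, (i < n)%nat -> Rabs (w i - v i) <= 2 * a)
    by (intros i Hi; rewrite Rabs_minus_sym; auto).
  pose proof (normXTv_sub_upper_tail th n p w v a lam t Hth Ha Hw Hv Hwv Hlam Hlam1 Hlam2)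
    as Hwv_tail.
  simpl in Hvw_tail, Hwv_tail; rewrite Ex_minus in Hvw_tail, Hwv_tail.
  change (Ex th (n * p) (fun s => normXTv n p s v)) with (mu n p th v) in *.
  change (Ex th (n * p) (fun s => normXTv n p s w)) with (mu n p th w) in *.
  unfold ProbGe; change (Expect n p th) with (Ex th (n * p)).
  eapply Rle_trans;
    [|rewrite <- Rplus_diag; apply Rplus_le_compat; [exact Hvw_tail | exact Hwv_tail]].
  rewrite <- Ex_plus; apply Ex_le; auto; intro s.
  set (x := normXTv n p s v); set (y := normXTv n p s w).
  pose proof (Rle_abs (mu n p th v - mu n p th w));
    pose proof (Rle_abs (- (mu n p th v - mu n p th w))); rewrite Rabs_Ropp in *.
  destruct (Rle_dec T (Rabs (x - y))) as [Hxy|];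
    destruct (Rle_dec t (x - y - (mu n p th v - mu n p th w)));
    destruct (Rle_dec t (y - x - (mu n p th w - mu n p th v))); try lra.
  unfold Rabs in Hxy; destruct (Rcase_abs (x - y)); lra.
Qed.

Lemma sqrt_div_le th nn : 0 < nn -> / nn <= th -> sqrt (th / nn) <= th.
Proof.
  intros Hnn Hth.
  assert (0 < th) by (pose proof (Rinv_0_lt_compat nn Hnn); lra).
  rewrite <- (sqrt_square th) at 2 by lra.
  apply sqrt_le_1_alt; unfold Rdiv.
  apply Rmult_le_compat_l; lra.
Qed.

(* lam minimises the Chernoff exponent of [normXTv_deviation_tail], whose constant
   is 301728 = 1347 * 224. *)
Section ChernoffParameters.

Variables c0 C nn L P th alpha T lam : R.
Hypothesis c0_pos : 0 < c0.
Hypothesis c0_le_L : c0 <= L.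
Hypothesis nn_pos : 0 < nn.
Hypothesis th_ge : / nn <= th.
Hypothesis alpha_pos : 0 < alpha.
Hypothesis nn_alpha_ge : 2 <= nn * alpha.
Hypothesis P_ge : C * nn * L ^ 3 <= P.
Hypothesis C_ge : 864 * 301728 / (25 * c0 ^ 2) <= C.
Hypothesis T_def : T = c0 * P * sqrt (th / nn) / L.
Hypothesis lam_def : lam = 5 * T / 6 / (2 * (P * 301728 * th * alpha)).

Let th_pos : 0 < th.
Proof. pose proof (Rinv_0_lt_compat nn nn_pos); lra. Qed.

Let P_pos : 0 < P.
Proof.
  assert (0 < 864 * 301728 / (25 * c0 ^ 2)) by (apply Rdiv_lt_0_compat; nra).
  assert (0 < C * nn * L ^ 3) by (repeat apply Rmult_lt_0_compat; try apply pow_lt; lra).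
  lra.
Qed.

Let sqrt_div_pos : 0 < sqrt (th / nn).
Proof. pose proof th_pos; apply sqrt_lt_R0, Rdiv_lt_0_compat; lra. Qed.

Let T_pos : 0 < T.
Proof.
  pose proof P_pos; pose proof sqrt_div_pos.
  rewrite T_def; apply Rdiv_lt_0_compat; [repeat apply Rmult_lt_0_compat|]; lra.
Qed.

(* Expressing th through s = sqrt (th / nn) removes the square root from all identities below. *)
Let th_eq : th = nn * sqrt (th / nn) ^ 2.
Proof.
  pose proof th_pos; pose proof (Rinv_0_lt_compat nn nn_pos).
  rewrite <- Rsqr_pow2, Rsqr_sqrt; [field; lra | unfold Rdiv; apply Rmult_le_pos; lra].
Qed.

Lemma chernoff_lambda_nonneg : 0 <= lam.
Proof.
  pose proof T_pos; pose proof P_pos; pose proof th_pos.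
  rewrite lam_def; left; apply Rdiv_lt_0_compat; [lra | repeat apply Rmult_lt_0_compat; lra].
Qed.

Lemma chernoff_lambda_scale : 4 * alpha * lam <= 1.
Proof.
  pose proof P_pos; pose proof th_pos; pose proof sqrt_div_pos.
  assert (Hs : sqrt (th / nn) <= th) by (apply sqrt_div_le; auto).
  set (s := sqrt (th / nn)) in *.
  assert (E : 4 * alpha * lam * (L * 301728 * th) = 5 / 3 * (c0 * s)).
  { rewrite lam_def, T_def; field; repeat split; lra. }
  assert (c0 * s <= L * th) by (apply Rmult_le_compat; lra).
  apply Rmult_le_reg_r with (L * 301728 * th); [repeat apply Rmult_lt_0_compat; lra|].
  rewrite Rmult_1_l, E; nra.
Qed.

Lemma chernoff_lambda_variance : 224 * th * lam ^ 2 * alpha <= / 96.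
Proof.
  pose proof P_pos; pose proof th_pos; pose proof sqrt_div_pos; pose proof th_eq.
  set (s := sqrt (th / nn)) in *.
  assert (E : 224 * th * lam ^ 2 * alpha * (144 * 301728 ^ 2 * (nn * alpha) * L ^ 2)
              = 224 * 25 * c0 ^ 2).
  { rewrite lam_def, T_def, th_eq; field; repeat split; lra. }
  assert (0 < L ^ 2) by (apply pow_lt; lra).
  assert (c0 ^ 2 <= L ^ 2) by (apply pow_incr; lra).
  apply Rmult_le_reg_r with (144 * 301728 ^ 2 * (nn * alpha) * L ^ 2);
    [repeat apply Rmult_lt_0_compat; lra|].
  rewrite E; nra.
Qed.

Lemma chernoff_exponent_le :
  - (lam * (5 * T / 6)) + P * (1347 * (224 * th * lam ^ 2 * alpha)) <= - (6 * (L / alpha)).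
Proof.
  pose proof P_pos; pose proof th_pos; pose proof sqrt_div_pos; pose proof th_eq.
  set (s := sqrt (th / nn)) in *.
  assert (0 < L ^ 2) by (apply pow_lt; lra).
  assert (HM : 0 < 144 * 301728 * nn * L ^ 2 * alpha) by (repeat apply Rmult_lt_0_compat; lra).
  apply Rmult_le_reg_r with (144 * 301728 * nn * L ^ 2 * alpha); [exact HM|].
  replace ((- (lam * (5 * T / 6)) + P * (1347 * (224 * th * lam ^ 2 * alpha)))
           * (144 * 301728 * nn * L ^ 2 * alpha)) with (- (25 * c0 ^ 2 * P))
    by (rewrite lam_def, T_def, th_eq; field; repeat split; lra).
  replace (- (6 * (L / alpha)) * (144 * 301728 * nn * L ^ 2 * alpha))
    with (- (864 * 301728 * (nn * L ^ 3))) by (field; lra).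
  assert (864 * 301728 <= 25 * c0 ^ 2 * C).
  { assert (0 < 25 * c0 ^ 2) by nra.
    apply Rmult_le_compat_l with (r := 25 * c0 ^ 2) in C_ge; [|lra].
    replace (25 * c0 ^ 2 * (864 * 301728 / (25 * c0 ^ 2))) with (864 * 301728) in C_ge
      by (field; lra).
    exact C_ge. }
  assert (0 < nn * L ^ 3) by (apply Rmult_lt_0_compat; [lra | apply pow_lt; lra]).
  assert (0 <= 25 * c0 ^ 2) by nra.
  nra.
Qed.

Lemma chernoff_parameters :
  0 <= lam /\ 4 * alpha * lam <= 1 /\ 224 * th * lam ^ 2 * alpha <= / 96 /\
  - (lam * (5 * T / 6)) + P * (1347 * (224 * th * lam ^ 2 * alpha)) <= - (6 * (L / alpha)).
Proof.
  split; [|split; [|split]].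
  - apply chernoff_lambda_nonneg.
  - apply chernoff_lambda_scale.
  - apply chernoff_lambda_variance.
  - apply chernoff_exponent_le.
Qed.

End ChernoffParameters.

Lemma exp_le_INR_of_up x n : (Z.to_nat (up (exp x)) <= n)%nat -> exp x <= INR n.
Proof.
  intro Hn; destruct (archimed (exp x)) as [Hup _].
  assert (Hup0 : (0 <= up (exp x))%Z) by (apply le_IZR; pose proof (exp_pos x); lra).
  apply le_INR in Hn; rewrite INR_IZR_INZ, Z2Nat.id in Hn by exact Hup0; lra.
Qed.

Lemma le_ln_of_exp_le x y : exp x <= y -> x <= ln y.
Proof.
  intro H; rewrite <- (ln_exp x) at 1.
  destruct (Req_dec (exp x) y) as [<-|]; [lra|].
  left; apply ln_increasing; [apply exp_pos | lra].
Qed.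

Lemma dyadic_scale_ge nn l : 0 < nn -> 2 <= nn * (2 ^ l * (2 / nn)).
Proof.
  intro Hnn; pose proof (pow_R1_Rle 2 l ltac:(lra)).
  replace (nn * (2 ^ l * (2 / nn))) with (2 * 2 ^ l) by (field; lra); lra.
Qed.

Lemma two_exp_le x y : 1 <= y -> x <= - (6 * y) -> 2 * exp x <= exp (- (5 * y)).
Proof.
  intros Hy Hx.
  assert (2 <= exp y) by (pose proof (exp_ineq1_le y); lra).
  replace (- (5 * y)) with (y + - (6 * y)) by ring; rewrite exp_plus.
  pose proof (exp_le_exp _ _ Hx); pose proof (exp_pos x); nra.
Qed.

Theorem mainTheorem8 :
  forall c0 : R, 0 < c0 ->
  exists C0 : R, 0 < C0 /\
  forall C : R, C0 <= C ->
  exists N : nat, forall n : nat, (N <= n)%nat ->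
  forall (theta : R), / INR n <= theta <= 1 ->
  forall p : nat,
    INR p - 1 < C * INR n * (ln (INR n)) ^ 3 <= INR p ->   (* p = ceil(C n log^3 n) *)
  let T := c0 * INR p * sqrt (theta / INR n) / ln (INR n) in
  forall l : nat,
  let alpha := 2 ^ l * (2 / INR n) in
  alpha <= 1 ->
  forall v w : nat -> R,
    l1norm n v <= 1 -> l1norm n w <= 1 ->
    (forall i : nat, (i < n)%nat -> Rabs (v i - w i) <= 2 * alpha) ->
    Rabs (mu n p theta v - mu n p theta w) <= T / 6 ->
    ProbGe n p theta (fun s => Rabs (normXTv n p s v - normXTv n p s w)) T
      <= exp (- (5 * / alpha * ln (INR n))).
Proof.
  intros c0 Hc0.
  exists (864 * 301728 / (25 * c0 ^ 2)); split; [apply Rdiv_lt_0_compat; nra|].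
  intros C HC; exists (Z.to_nat (up (exp (1 + c0)))).
  intros n Hn theta Hth p Hp T l alpha Halpha1 v w Hv Hw Hvw Hmu.
  pose proof (exp_le_INR_of_up _ _ Hn) as Hexp.
  assert (Hnn : 0 < INR n) by (pose proof (exp_pos (1 + c0)); lra).
  assert (HL : 1 + c0 <= ln (INR n)) by (apply le_ln_of_exp_le, Hexp).
  assert (Halpha : 0 < alpha)
    by (apply Rmult_lt_0_compat; [apply pow_lt | apply Rdiv_lt_0_compat]; lra).
  assert (Hnalpha : 2 <= INR n * alpha) by (apply dyadic_scale_ge, Hnn).
  assert (Hth0 : 0 < / INR n) by (apply Rinv_0_lt_compat, Hnn).
  set (lam := 5 * T / 6 / (2 * (INR p * 301728 * theta * alpha))).
  destruct (chernoff_parameters c0 C (INR n) (ln (INR n)) (INR p) theta alpha T lam)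
    as (Hlam0 & Hlam1 & Hlam2 & Hexponent);
    try lra; try reflexivity.
  eapply Rle_trans.
  { apply (normXTv_deviation_tail theta n p v w alpha lam (5 * T / 6) T); auto; lra. }
  replace (5 * / alpha * ln (INR n)) with (5 * (ln (INR n) / alpha)) by (field; lra).
  apply two_exp_le; [|exact Hexponent].
  apply Rmult_le_reg_r with alpha; [exact Halpha|].
  unfold Rdiv; rewrite Rmult_assoc, Rinv_l; lra.
Qed.
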